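(* Let $E$ be a real Banach space, $K\subset E$ nonempty closed convex, $Y$ a real Banach space containing a closed, convex, pointed cone $C$ with nonempty interior, $f:E\times E\to Y$, $T:K\to\mathcal P(K)$, and $g\in\mathcal F$ satisfying H1–H4, with B1–B4 holding. Suppose $\{x^k\}$, $\{v^k\}$ and $\{w^k\}$ are the (infinite) sequences generated by Algorithm SEML. If these sequences are bounded, then $$\lim_{k\to\infty}\|v^{k+1}-v^k\|=\lim_{k\to\infty}\|v^k-x^k\|=\lim_{k\to\infty}\|x^k-w^k\|=0.$$
   Context: $C^+=\{z\in Y^*:\langle y,z\rangle\ge0\ \forall y\in C\}$; $y\preceq y'$ iff $y'-y\in C$; $C$-convex: $G(tx+(1-t)y)\preceq tG(x)+(1-t)G(y)$. $\mathcal F$: functions $g:E\to\mathbb R$ strictly convex, lower semicontinuous, Gâteaux differentiable with derivative $g'$. $D_g(x,y)=g(x)-g(y)-\langle x-y,g'(y)\rangle$; $v_g(x,t)=\inf\{D_g(y,x):\|y-x\|=t\}$. H1: level sets of $D_g(x,\cdot)$ bounded; H2: $\inf_{x\in A}v_g(x,t)>0$ for $t>0$, bounded $A$; H3: $g'$ uniformly continuous on bounded sets; H4: $\lim_{\|x\|\to\infty}(g(x)-\rho\|x-z\|)=\infty$ for all $z$, $\rho>0$. $\Pi^g_D(x)$: unique minimizer of $D_g(\cdot,x)$ over nonempty closed convex $D$. B1: $f(x,x)=0$. B2: $f$ uniformly continuous on bounded subsets of $E\times E$. B3: $f(x,\cdot)$ $C$-convex. B4: $T$ has nonempty closed convex values,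 is demiclosed ($x^k\rightharpoonup\bar x$, $d(x^k,T(x^k))\to0\Rightarrow\bar x\in T(\bar x)$), lower semicontinuous at each $\bar x\in K$ ($x^k\to\bar x$, $\bar y\in T(\bar x)\Rightarrow\exists y^k\in T(x^k)$, $y^k\to\bar y$), quasi $D_g$-nonexpansive ($S(x)=\Pi^g_{T(x)}(x)$ has a fixed point and $D_g(p,S(x))\le D_g(p,x)$ for all fixed points $p$ of $S$ and $x\in K$). $\mathrm{argmin}^C_w\{G(y):y\in Q\}$: $a\in Q$ with no $y\in Q$ such that $G(a)-G(y)\in\mathrm{int}(C)$. Algorithm SEML: parameters $v^0\in K$, $\delta,\theta\in(0,1)$, $\{\beta_k\}\subset[\hat\beta,\tilde\beta]$ with $0<\hat\beta\le\tilde\beta$, $\{\gamma_k\}\subset[\varepsilon,1]$, $\varepsilon\in(0,1]$, $\{e^k\}\subset\mathrm{int}(C)$, $e^k\to\bar e\in\mathrm{int}(C)$. Given $v^k$: $x^k=\Pi^g_{T(v^k)}(v^k)$; $z^k\in\mathrm{argmin}^C_w\{\beta_kf(x^k,y)+g(y)e^k-\langle y,g'(x^k)\rangle e^k:y\in T(v^k)\}$; stop if $z^k=v^k$; else $\ell(k)=\min\{\ell\ge0:-\beta_kf(y^\ell,x^k)+\beta_kf(y^\ell,z^k)+\delta D_g(z^k,x^k)e^k\notin\mathrm{int}(C)\}$, $y^\ell=\theta^\ell z^k+(1-\theta^\ell)x^k$; $\alpha_k=\theta^{\ell(k)}$; $y^k=\alpha_kz^k+(1-\alpha_k)x^k$;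 $H_k=\{y:f(y^k,y)\in-C\}$; $K_0=K\cap H_0$, $K_k=K_{k-1}\cap H_k$; $w^k=\Pi^g_{K_k}(x^k)$; $v^{k+1}=\Pi^g_{L_k\cap M_k\cap N_k}(v^0)$ with $L_k=\{z:\langle z-x^k,g'(x^k)-g'(w^k)\rangle\le-\gamma_kD_g(x^k,w^k)\}$, $M_k=\{z:\langle z-v^k,g'(v^k)-g'(x^k)\rangle\le-\gamma_kD_g(v^k,x^k)\}$, $N_k=\{z:\langle z-v^k,g'(v^0)-g'(v^k)\rangle\le0\}$. *)

From HB Require Import structures.
From mathcomp Require Import all_boot all_order all_algebra.
From mathcomp Require Import all_classical all_reals all_analysis.
Set Implicit Arguments. Unset Strict Implicit. Unset Printing Implicit Defensive.
Import Order.TTheory GRing.Theory Num.Theory.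
Import numFieldNormedType.Exports.
Local Open Scope classical_set_scope.
Local Open Scope ring_scope.

Section SEMLDefs.
Context {R : realType}.

Definition bdd_set {V : normedModType R} (A : set V) : Prop :=
  exists M : R, forall a, A a -> `|a| <= M.

Definition bdd_seq {V : normedModType R} (u : nat -> V) : Prop :=
  exists M : R, forall k, `|u k| <= M.

Definition cvx_set {V : normedModType R} (A : set V) : Prop :=
  forall a b (t : R), A a -> A b -> 0 <= t <= 1 -> A (t *: a + (1 - t) *: b).

Definition is_dual_elem {V : normedModType R} (phi : V -> R) : Prop :=
  (forall (a : R) u w, phi (a *: u + w) = a * phi u + phi w) /\ continuous phi.

Definition weak_cvg {V : normedModType R} (u : nat -> V) (xb : V) : Prop :=
  forall phi : V -> R, is_dual_elem phi -> (fun k => phi (u k)) @ \oo --> phi xb.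

Definition good_cone {Y : normedModType R} (C : set Y) : Prop :=
  [/\ (forall c (l : R), C c -> 0 <= l -> C (l *: c)),
      cvx_set C, closed C,
      (forall c, C c -> C (- c) -> c = 0)
    & exists c, (interior C) c].

Definition cle {Y : normedModType R} (C : set Y) (a b : Y) : Prop := C (b - a).

Definition C_convex {E Y : normedModType R} (C : set Y) (G : E -> Y) : Prop :=
  forall a b (t : R), 0 <= t <= 1 ->
    cle C (G (t *: a + (1 - t) *: b)) (t *: G a + (1 - t) *: G b).

Definition wargmin {E Y : normedModType R} (C : set Y) (G : E -> Y) (Q : set E) (a : E)
  : Prop :=
  Q a /\ ~ (exists b, Q b /\ (interior C) (G a - G b)).

Section Bregman.
Context {E : normedModType R}.
Variables (g : E -> R) (g' : E -> E -> R).
(* g' a is the Gateaux derivative g'(a) ∈ E^*, and ⟨u, g'(a)⟩ = g' a u *)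

Definition Dg (a b : E) : R := g a - g b - g' b (a - b).

(* p = Π^g_D(a) : p is the minimizer of D_g(·,a) over D
   (the minimizer is unique for g ∈ F, D nonempty closed convex) *)
Definition is_proj (D : set E) (a p : E) : Prop :=
  D p /\ forall b, D b -> Dg p a <= Dg b a.

Definition class_F : Prop :=
  [/\
      (forall a b (t : R), a <> b -> 0 < t < 1 ->
         g (t *: a + (1 - t) *: b) < t * g a + (1 - t) * g b),
      (forall a (eps : R), 0 < eps -> \forall b \near a, g a - eps < g b),
      (forall a, is_dual_elem (g' a))
    &
      (forall a h, (fun t : R => t^-1 * (g (a + t *: h) - g a)) @ (0 : R)^' --> g' a h)].

Definition H1 : Prop := forall a (r : R), bdd_set [set b | Dg a b <= r].

(* H2: inf_{a∈A} v_g(a,t) > 0 for bounded A and t > 0, where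
   v_g(a,t) = inf {D_g(b,a) : ‖b - a‖ = t}; written out: a positive lower bound *)
Definition H2 : Prop :=
  forall (A : set E) (t : R), bdd_set A -> 0 < t ->
    exists c : R, 0 < c /\
      forall a b, A a -> `|b - a| = t -> c <= Dg b a.

(* H3: g' : E -> E^* uniformly continuous on bounded sets (dual norm) *)
Definition H3 : Prop :=
  forall (A : set E), bdd_set A -> forall eps : R, 0 < eps ->
    exists del : R, 0 < del /\
      forall a b, A a -> A b -> `|a - b| < del ->
        forall u, `|u| <= 1 -> `|g' a u - g' b u| <= eps.

Definition H4 : Prop :=
  forall (z : E) (rho : R), 0 < rho -> forall M : R,
    exists N : R, forall a, N <= `|a| -> M <= g a - rho * `|a - z|.

End Bregman.

Section Bifun.
Context {E Y : normedModType R}.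

Definition B1 (f : E -> E -> Y) : Prop := forall a, f a a = 0.

Definition B2 (f : E -> E -> Y) : Prop :=
  forall (A : set E), bdd_set A -> forall eps : R, 0 < eps ->
    exists del : R, 0 < del /\
      forall a1 b1 a2 b2, A a1 -> A b1 -> A a2 -> A b2 ->
        `|a1 - a2| < del -> `|b1 - b2| < del -> `|f a1 b1 - f a2 b2| < eps.

Definition B3 (C : set Y) (f : E -> E -> Y) : Prop := forall a, C_convex C (f a).
End Bifun.

Section Tmap.
Context {E : normedModType R}.
Variables (K : set E) (T : E -> set E) (g : E -> R) (g' : E -> E -> R).

(* fixed point of S(a) = Π^g_{T(a)}(a) *)
Definition S_fixed (p : E) : Prop := K p /\ is_proj g g' (T p) p p.

(* B4 ; T : K -> P(K) is modelled as T : E -> set E, only used on K *)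
Definition B4 : Prop :=
  [/\
      (forall a, K a -> [/\ T a `<=` K, T a !=set0, closed (T a) & cvx_set (T a)]),
      (forall (u : nat -> E) xb, (forall k, K (u k)) -> weak_cvg u xb ->
         (forall eps : R, 0 < eps ->
            \forall k \near \oo, exists b, T (u k) b /\ `|u k - b| < eps) ->
         T xb xb),
      (forall (u : nat -> E) xb yb, K xb -> (forall k, K (u k)) -> u @ \oo --> xb ->
         T xb yb ->
         exists yy : nat -> E, (forall k, T (u k) (yy k)) /\ yy @ \oo --> yb)
    &
      ((exists p, S_fixed p) /\
       forall p a s, S_fixed p -> K a -> is_proj g g' (T a) a s ->
         Dg g g' p s <= Dg g g' p a)].
End Tmap.

Section Alg.
Context {E Y : normedModType R}.
Variables (K : set E) (C : set Y) (f : E -> E -> Y) (T : E -> set E)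
  (g : E -> R) (g' : E -> E -> R).

Definition SEML_params (delta theta betahat betatil epsi : R) (beta gamma : nat -> R)
  (e : nat -> Y) (ebar : Y) : Prop :=
  [/\ 0 < delta < 1, 0 < theta < 1,
      0 < betahat <= betatil /\ (forall k, betahat <= beta k <= betatil),
      0 < epsi <= 1 /\ (forall k, epsi <= gamma k <= 1)
    & [/\ forall k, (interior C) (e k), e @ \oo --> ebar & (interior C) ebar]].

Definition ls_cond (delta theta : R) (beta : nat -> R) (e : nat -> Y)
  (x z : nat -> E) (k l : nat) : Prop :=
  let yl := theta ^+ l *: z k + (1 - theta ^+ l) *: x k in
  ~ (interior C) (- (beta k *: f yl (x k)) + beta k *: f yl (z k)
                  + (delta * Dg g g' (z k) (x k)) *: e k).

Definition Hset (y : nat -> E) (j : nat) : set E := [set u | C (- f (y j) u)].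

Definition Kset (y : nat -> E) (k : nat) : set E :=
  [set u | K u /\ forall j, (j <= k)%N -> Hset y j u].

Definition Lset (gamma : nat -> R) (x w : nat -> E) (k : nat) : set E :=
  [set u | g' (x k) (u - x k) - g' (w k) (u - x k) <= - (gamma k * Dg g g' (x k) (w k))].

Definition Mset (gamma : nat -> R) (x v : nat -> E) (k : nat) : set E :=
  [set u | g' (v k) (u - v k) - g' (x k) (u - v k) <= - (gamma k * Dg g g' (v k) (x k))].

Definition Nset (v : nat -> E) (k : nat) : set E :=
  [set u | g' (v 0%N) (u - v k) - g' (v k) (u - v k) <= 0].

(* (x,z,ell,y,w,v) are the infinite sequences generated by SEML from v 0 = v^0 ∈ K;
   ell k = ℓ(k), alpha_k = theta^ell(k) *)
Definition SEML_seq (delta theta : R) (beta gamma : nat -> R) (e : nat -> Y)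
  (x z y w v : nat -> E) (ell : nat -> nat) : Prop :=
  K (v 0%N) /\
  forall k,
  [/\ K (v k) (* T(v^k) must be defined *),
      is_proj g g' (T (v k)) (v k) (x k),
      wargmin C (fun u => beta k *: f (x k) u + (g u - g' (x k) u) *: e k) (T (v k)) (z k),
      z k <> v k (* the algorithm does not stop *)
    & ls_cond delta theta beta e x z k (ell k) /\
        (forall l, (l < ell k)%N -> ~ ls_cond delta theta beta e x z k l)] /\
  [/\ y k = theta ^+ ell k *: z k + (1 - theta ^+ ell k) *: x k,
      is_proj g g' (Kset y k) (x k) (w k)
    & is_proj g g' (Lset gamma x w k `&` Mset gamma x v k `&` Nset v k) (v 0%N) (v k.+1)].

End Alg.
End SEMLDefs.

(* The cut N_k makes D_g(v^k, v^0) nondecreasing, with increments bounded below by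
   D_g(v^(k+1), v^k) (three-point identity). It is bounded because the iterates are, and g'
   is bounded on bounded sets (chaining the uniform continuity H3), so these increments
   vanish. The cuts M_k and L_k then bound D_g(v^k, x^k) and D_g(x^k, w^k) by a constant
   times ||v^(k+1) - v^k|| and ||v^(k+1) - x^k||, and H2 turns vanishing Bregman distances
   along a bounded sequence into vanishing norms. *)

From HB Require Import structures.
From mathcomp Require Import all_boot all_order all_algebra.
From mathcomp Require Import all_classical all_reals all_analysis.
From mathcomp Require Import ring lra.
Import Order.TTheory GRing.Theory Num.Theory.
Import numFieldNormedType.Exports.
Local Open Scope classical_set_scope.
Local Open Scope ring_scope.

Section DualElem.
Context {R : realType} {E : normedModType R}.
Context {phi : E -> R} (hphi : is_dual_elem phi).

Let phi_linear : linear phi.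
Proof. by case: hphi => lin _ a u w; rewrite lin. Qed.

Definition dual_linear : {linear E -> R} :=
  HB.pack phi (GRing.isLinear.Build _ _ _ _ _ phi_linear).

Lemma dual_elemD u w : phi (u + w) = phi u + phi w.
Proof. exact: (linearD dual_linear). Qed.

Lemma dual_elemN u : phi (- u) = - phi u.
Proof. exact: (linearN dual_linear). Qed.

Lemma dual_elemZ a u : phi (a *: u) = a * phi u.
Proof. exact: (linearZZ dual_linear). Qed.

Lemma dual_elem_bounded : exists B : R, 0 <= B /\ forall u, `|phi u| <= B * `|u|.
Proof.
have /linear_boundedP : bounded_near dual_linear (nbhs 0).
  exact/continuous_linear_bounded/hphi.2.
case=> r [_ hr]; exists (Num.max (r + 1) 0); split; first by rewrite le_max lexx orbT.
by apply: hr; rewrite lt_max ltrDl ltr01.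
Qed.

Lemma dual_elem_bound_of_unit_ball (B : R) :
  (forall u, `|u| <= 1 -> `|phi u| <= B) -> forall u, `|phi u| <= B * `|u|.
Proof.
move=> hB u; have [->|u0] := eqVneq u 0.
  by rewrite normr0 mulr0 -(scale0r (0 : E)) dual_elemZ mul0r normr0.
have nu0 : 0 < `|u| by rewrite normr_gt0.
have := hB (`|u|^-1 *: u).
rewrite normrZ normfV normr_id mulVf ?gt_eqF // lexx dual_elemZ normrM normfV normr_id.
by move=> /(_ isT); rewrite mulrC ler_pdivrMr.
Qed.

End DualElem.

Lemma unif_cont_ball_bound {R : realType} {V W : normedModType R} (F : V -> W)
    (r del : R) (N : nat) :
  0 < del -> r < N%:R * del ->
  (forall a b, `|a| <= r -> `|b| <= r -> `|a - b| < del -> `|F a - F b| <= 1) ->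
  forall a, `|a| <= r -> `|F a - F 0| <= N%:R.
Proof.
move=> del0 rN hF a ar.
have N0 : (0 < N%:R :> R).
  by rewrite -(pmulr_lgt0 _ del0); apply: le_lt_trans rN; apply: le_trans ar.
have in_ball i : (i <= N)%N -> `|(i%:R / N%:R) *: a| <= r.
  move=> iN; rewrite normrZ ger0_norm ?divr_ge0 // -[leRHS]mul1r.
  by rewrite ler_pM // ler_pdivrMr // mul1r ler_nat.
suff chain i : (i <= N)%N -> `|F ((i%:R / N%:R) *: a) - F 0| <= i%:R.
  by have := chain N (leqnn N); rewrite mulfV ?gt_eqF // scale1r.
elim: i => [|i IHi] iN; first by rewrite mul0r scale0r subrr normr0.
set ai := (i%:R / N%:R) *: a.
rewrite -(subrK (F ai) (F _)) -addrA -[leRHS]nat1r.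
apply: (le_trans (ler_normD _ _)); apply: lerD; last exact: IHi (ltnW iN).
apply: hF; [exact: in_ball | exact: in_ball (ltnW iN) |].
rewrite -scalerBl -mulrBl -natrB // subSnn mul1r normrZ ger0_norm ?invr_ge0 ?ltW //.
by rewrite mulrC ltr_pdivrMr // (le_lt_trans ar) // mulrC.
Qed.

Section Bregman.
Context {R : realType} {E : normedModType R}.
Context {g : E -> R} {g' : E -> E -> R}.
Hypothesis hF : class_F g g'.

Let g'_dual a : is_dual_elem (g' a).
Proof. by case: hF. Qed.

Lemma classF_convex a b (t : R) : 0 <= t <= 1 ->
  g (t *: a + (1 - t) *: b) <= t * g a + (1 - t) * g b.
Proof.
case: hF => strict _ _ _ /andP[t0 t1].
have [->|ab] := eqVneq a b; first by rewrite -scalerDl -mulrDl addrC subrK scale1r mul1r.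
have [->|tn0] := eqVneq t 0; first by rewrite scale0r mul0r !add0r subr0 scale1r mul1r.
have [->|tn1] := eqVneq t 1; first by rewrite scale1r mul1r subrr scale0r mul0r !addr0.
by apply/ltW/strict; [apply/eqP | rewrite !lt_neqAle eq_sym tn0 tn1 t0 t1].
Qed.

Lemma classF_grad_le a h : g' a h <= g (a + h) - g a.
Proof.
have quot_cvg : (fun t : R => t^-1 * (g (a + t *: h) - g a)) @ 0^'+ --> g' a h.
  case: hF => _ _ _ /(_ a h); apply: cvg_trans; apply: cvg_app.
  by apply: within_subset => // t /= /lt0r_neq0.
apply: (ler_cvg_to quot_cvg (cvg_cst _)); near=> t.
have t0 : 0 < t by near: t; exact: nbhs_right_gt.
have t1 : t < 1 by near: t; exact: nbhs_right_lt.
rewrite ler_pdivrMl // lerBlDr.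
have := classF_convex (a + h) a t; rewrite ltW // ltW // => /(_ isT).
rewrite scalerDr scalerBl scale1r addrC addrA subrK => /le_trans; apply.
by rewrite mulrBl mulrBr mul1r; lra.
Unshelve. all: end_near.
Qed.

Lemma Dg_ge0 a b : 0 <= Dg g g' a b.
Proof. by rewrite subr_ge0; have := classF_grad_le b (a - b); rewrite subrKC. Qed.

Lemma Dg_three_point a b c :
  Dg g g' a b = Dg g g' a c + Dg g g' c b + (g' c (a - c) - g' b (a - c)).
Proof.
rewrite /Dg; have -> : a - b = (a - c) + (c - b) by rewrite addrA subrK.
by rewrite dual_elemD //; ring.
Qed.

Lemma Dg_le_grad_gap a b : Dg g g' a b <= g' a (a - b) - g' b (a - b).
Proof.
by have := classF_grad_le a (b - a); rewrite subrKC -opprB dual_elemN // /Dg; lra.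
Qed.

Lemma Dg_segment_le a b (l : R) : 0 <= l <= 1 ->
  Dg g g' (a + l *: (b - a)) a <= l * Dg g g' b a.
Proof.
move=> l01; have := classF_convex b a l l01.
have -> : l *: b + (1 - l) *: a = a + l *: (b - a).
  by rewrite scalerBr scalerBl scale1r addrCA addrC.
by rewrite /Dg [a + _ - a]addrC addKr (dual_elemZ (g'_dual a)) mulrBl mul1r !mulrBr; lra.
Qed.

Hypothesis h2 : H2 g g'.

Lemma H2_ge (A : set E) (t : R) : bdd_set A -> 0 < t ->
  exists c : R, 0 < c /\ forall a b, A a -> t <= `|b - a| -> c <= Dg g g' b a.
Proof.
move=> bA t0; have [c [c0 hc]] := h2 A t bA t0; exists c; split => // a b Aa tab.
have ba0 : 0 < `|b - a| by apply: lt_le_trans tab.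
set l := t / `|b - a|.
have l01 : 0 <= l <= 1 by rewrite /l divr_ge0 ?(ltW t0) //= ler_pdivrMr // mul1r.
have dist_t : `|a + l *: (b - a) - a| = t.
  by rewrite addrC addKr normrZ ger0_norm ?divfK ?gt_eqF //; case/andP: l01.
apply: (le_trans (hc _ _ Aa dist_t)); apply: (le_trans (Dg_segment_le _ _ _ l01)).
by rewrite -[leRHS]mul1r ler_wpM2r ?Dg_ge0 //; case/andP: l01.
Qed.

Lemma dist_cvg0_of_Dg_cvg0 {a b : nat -> E} : bdd_seq a ->
  (fun k => Dg g g' (b k) (a k)) @ \oo --> 0 -> (fun k => `|b k - a k|) @ \oo --> 0.
Proof.
move=> [M hM] hD; apply/cvgrPdist_lt => t t0.
have bA : bdd_set (range a) by exists M => _ [k _ <-].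
have [c [c0 hc]] := H2_ge _ _ bA t0.
move/cvgrPdist_lt: hD => /(_ c c0); apply: filterS => k.
rewrite !sub0r !normrN normr_id ger0_norm ?Dg_ge0 // => Dk; rewrite ltNge.
by apply/negP => /(hc _ _ (ex_intro2 _ _ k I erefl)); rewrite leNgt Dk.
Qed.

Hypothesis h3 : H3 g'.

Lemma g'_bounded (M : R) :
  exists B : R, 0 <= B /\ forall a u, `|a| <= M -> `|g' a u| <= B * `|u|.
Proof.
set r := Num.max M 0.
have ball_bdd : bdd_set [set a : E | `|a| <= r] by exists r.
have [del [del0 hdel]] := h3 _ ball_bdd 1 ltr01.
set N := Num.bound (r / del).
have rN : r < N%:R * del.
  by rewrite -ltr_pdivrMr // archi_boundP // divr_ge0 ?le_max ?lexx ?orbT // ltW.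
have [B0 [B00 hB0]] := dual_elem_bounded (g'_dual 0).
exists (N%:R + B0); split; first by rewrite addr_ge0.
move=> a u aM; apply: (dual_elem_bound_of_unit_ball (g'_dual a)) => {}u u1.
have ar : `|a| <= r by rewrite le_max aM.
rewrite -(subrK (g' 0 u) (g' a u)); apply: (le_trans (ler_normD _ _)); apply: lerD.
  apply: (unif_cont_ball_bound (fun b => g' b u) r del N del0 rN _ a ar).
  by move=> a1 b1 a1r b1r ab; exact: hdel.
by apply: (le_trans (hB0 u)); rewrite -[leRHS]mulr1 ler_wpM2l.
Qed.

End Bregman.

Section BoundedDerivative.
Context {R : realType} {E : normedModType R}.
Context {g : E -> R} {g' : E -> E -> R} {M B : R}.
Hypothesis hB : forall a u, `|a| <= M -> `|g' a u| <= B * `|u|.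

Lemma grad_gap_le a b u : `|a| <= M -> `|b| <= M -> `|g' a u - g' b u| <= 2 * B * `|u|.
Proof.
move=> aM bM; apply: (le_trans (ler_normB _ _)).
by have := hB a u aM; have := hB b u bM; lra.
Qed.

Lemma Dg_le_dist : class_F g g' -> forall a b, `|a| <= M -> `|b| <= M ->
  Dg g g' a b <= 2 * B * `|a - b|.
Proof.
move=> hF a b aM bM; apply: (le_trans (Dg_le_grad_gap hF a b)).
exact: le_trans (ler_norm _) (grad_gap_le _ _ _ aM bM).
Qed.

Lemma cut_depth_le {epsi gam D : R} {p q u : E} : 0 < epsi -> epsi <= gam -> 0 <= D ->
  `|p| <= M -> `|q| <= M -> g' p u - g' q u <= - (gam * D) ->
  D <= 2 * B / epsi * `|u|.
Proof.
move=> eps0 eps_gam D0 pM qM cut; rewrite mulrAC ler_pdivlMr // mulrC.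
have epsD : epsi * D <= gam * D by rewrite ler_wpM2r.
have := grad_gap_le _ _ u pM qM; have := ler_norm (- (g' p u - g' q u)).
by rewrite normrN; lra.
Qed.

End BoundedDerivative.

Lemma squeeze_cvg0 {R : realType} {u h : nat -> R} (c : R) :
  (forall k, 0 <= u k <= c * h k) -> h @ \oo --> 0 -> u @ \oo --> 0.
Proof.
move=> hu h0; apply: (@squeeze_cvgr _ _ _ _ (fun _ => 0) (fun k => c * h k)).
- by near=> k; apply: hu.
- exact: cvg_cst.
- by rewrite -(mulr0 c); apply: cvgMl_tmp.
Unshelve. all: end_near.
Qed.

Lemma cvg_succ_sub0 {R : realType} {V : normedModType R} {u : nat -> V} {l : V} :
  u @ \oo --> l -> (fun k => u k.+1 - u k) @ \oo --> 0.
Proof. by move=> ul; rewrite -(subrr l); apply: cvgB => //; rewrite cvg_shiftS. Qed.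

Section SEMLIterates.
Context {R : realType} {E : normedModType R}.
Context {g : E -> R} {g' : E -> E -> R} {gamma : nat -> R} {epsi M B : R}.
Context {x v w : nat -> E}.
Hypotheses (hF : class_F g g') (h2 : H2 g g').
Hypotheses (B0 : 0 <= B) (hB : forall a u, `|a| <= M -> `|g' a u| <= B * `|u|).
Hypotheses (eps0 : 0 < epsi) (eps_gamma : forall k, epsi <= gamma k).
Hypotheses (xM : forall k, `|x k| <= M) (vM : forall k, `|v k| <= M)
  (wM : forall k, `|w k| <= M).
Hypotheses (vS_L : forall k, Lset g g' gamma x w k (v k.+1))
  (vS_M : forall k, Mset g g' gamma x v k (v k.+1))
  (vS_N : forall k, Nset g' v k (v k.+1)).

Let bdd_M {u : nat -> E} : (forall k, `|u k| <= M) -> bdd_seq u.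
Proof. by exists M. Qed.

Lemma Dg_vS_v_le_incr k :
  Dg g g' (v k.+1) (v k) <= Dg g g' (v k.+1) (v 0%N) - Dg g g' (v k) (v 0%N).
Proof.
have := vS_N k; rewrite /Nset /= subr_le0 => hN.
by rewrite (Dg_three_point hF (v k.+1) (v 0%N) (v k)) addrAC addrK lerDl subr_ge0.
Qed.

Lemma norm_vS_sub_v_cvg0 : (fun k => `|v k.+1 - v k|) @ \oo --> 0.
Proof.
pose d k := Dg g g' (v k) (v 0%N).
have d_nd : nondecreasing_seq d.
  apply/nondecreasing_seqP => k; rewrite -subr_ge0.
  exact: le_trans (Dg_ge0 hF _ _) (Dg_vS_v_le_incr k).
have d_ub : has_ubound (range d).
  exists (2 * B * (2 * M)) => _ [k _ <-].
  apply: (le_trans (Dg_le_dist hB hF _ _ (vM k) (vM 0%N))).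
  rewrite ler_wpM2l ?mulr_ge0 // (le_trans (ler_normB _ _)) //.
  by have := vM k; have := vM 0%N; lra.
apply: (dist_cvg0_of_Dg_cvg0 (b := fun k => v k.+1) hF h2 (bdd_M vM)).
apply: (squeeze_cvg0 1 _ (cvg_succ_sub0 (nondecreasing_cvgn d_nd d_ub))) => k.
by rewrite Dg_ge0 // mul1r Dg_vS_v_le_incr.
Qed.

Lemma norm_v_sub_x_cvg0 : (fun k => `|v k - x k|) @ \oo --> 0.
Proof.
apply: (dist_cvg0_of_Dg_cvg0 hF h2 (bdd_M xM)).
apply: (squeeze_cvg0 (2 * B / epsi) _ norm_vS_sub_v_cvg0) => k.
rewrite Dg_ge0 //=; apply: (cut_depth_le hB eps0 (eps_gamma k) (Dg_ge0 hF _ _) (vM k) (xM k)).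
exact: vS_M.
Qed.

Lemma norm_x_sub_w_cvg0 : (fun k => `|x k - w k|) @ \oo --> 0.
Proof.
apply: (dist_cvg0_of_Dg_cvg0 hF h2 (bdd_M wM)).
have h0 : (fun k => `|v k.+1 - v k| + `|v k - x k|) @ \oo --> 0.
  by rewrite -(addr0 0); apply: cvgD; [exact: norm_vS_sub_v_cvg0 | exact: norm_v_sub_x_cvg0].
apply: (squeeze_cvg0 (2 * B / epsi) _ h0) => k; rewrite Dg_ge0 //=.
apply: (le_trans (cut_depth_le hB eps0 (eps_gamma k) (Dg_ge0 hF _ _) (xM k) (wM k) (vS_L k))).
rewrite ler_wpM2l ?divr_ge0 ?mulr_ge0 ?(ltW eps0) //.
have -> : v k.+1 - x k = (v k.+1 - v k) + (v k - x k) by rewrite addrA subrK.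
exact: ler_normD.
Qed.

End SEMLIterates.

Theorem lemma3p9 (R : realType) (E Y : completeNormedModType R)
  (K : set E) (C : set Y) (f : E -> E -> Y) (T : E -> set E)
  (g : E -> R) (g' : E -> E -> R)
  (delta theta betahat betatil epsi : R) (beta gamma : nat -> R)
  (e : nat -> Y) (ebar : Y)
  (x z y w v : nat -> E) (ell : nat -> nat) :
  K !=set0 -> closed K -> cvx_set K ->
  good_cone C ->
  class_F g g' -> H1 g g' -> H2 g g' -> H3 g' -> H4 g ->
  B1 f -> B2 f -> B3 C f -> B4 K T g g' ->
  SEML_params C delta theta betahat betatil epsi beta gamma e ebar ->
  SEML_seq K C f T g g' delta theta beta gamma e x z y w v ell ->
  bdd_seq x -> bdd_seq v -> bdd_seq w ->
  [/\ (fun k => `|v k.+1 - v k|) @ \oo --> (0 : R),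
      (fun k => `|v k - x k|) @ \oo --> (0 : R)
    & (fun k => `|x k - w k|) @ \oo --> (0 : R)].
Proof.
move=> _ _ _ _ hF _ h2 h3 _ _ _ _ _ [_ _ _ [/andP[eps0 _] gamma_bd] _] [_ hseq].
move=> [Mx hx] [Mv hv] [Mw hw].
set M := Num.max Mx (Num.max Mv Mw).
have xM k : `|x k| <= M by rewrite !le_max hx.
have vM k : `|v k| <= M by rewrite !le_max hv !orbT.
have wM k : `|w k| <= M by rewrite !le_max hw !orbT.
have eps_gamma k : epsi <= gamma k by case/andP: (gamma_bd k).
have [B [B0 hB]] := g'_bounded hF h3 M.
have [vS_L vS_M vS_N] : [/\ forall k, Lset g g' gamma x w k (v k.+1),
    forall k, Mset g g' gamma x v k (v k.+1) & forall k, Nset g' v k (v k.+1)].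
  by split=> k; have [_ [_ _ [[[? ?] ?] _]]] := hseq k.
split.
- exact: norm_vS_sub_v_cvg0 hF h2 B0 hB vM vS_N.
- exact: norm_v_sub_x_cvg0 hF h2 B0 hB eps0 eps_gamma xM vM vS_M vS_N.
- exact: norm_x_sub_w_cvg0 hF h2 B0 hB eps0 eps_gamma xM vM wM vS_L vS_M vS_N.
Qed.
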